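(* Let $M$ be a right cancellative monoid and $\tau : X^* \to M$ a monoid choice of generators. Let $\varphi : \hat{X}^* \to H$ be the monoid morphism into the inverse hull $H$ of $M$ defined by $x\varphi = \rho_{x\tau}$ and $\overline{x}\varphi = \rho_{x\tau}^{-1}$ for $x \in X$. Then $L_\tau(M) = \{w \in \hat{X}^* : w\varphi \text{ is the identity of } H\}$.
   Context: Maps are written on the right. $X^*$ is the free monoid on $X$; a choice of generators is a surjective monoid morphism. Let $\overline{X} = \{\overline{x} : x \in X\}$ be new symbols, $\hat{X} = X \cup \overline{X}$. The loop automaton of $M$ w.r.t. $\tau$ has vertex set $M$, for each $a \in M$, $x \in X$ an edge $a \to a(x\tau)$ labelled $x$ and an edge $a(x\tau) \to a$ labelled $\overline{x}$; the loop problem $L_\tau(M) \subseteq \hat{X}^*$ is the set of labels of paths from the identity to the identity. For $m \in M$, $\rho_m : M \to M$, $a \mapsto am$, is injective by right cancellativity, with partial inverse $\rho_m^{-1} : Mm \to M$, $am \mapsto a$. The inverse hull $H$ of $M$ is the monoid of partial bijections of $M$ (under composition) generated by all $\rho_m$ and $\rho_m^{-1}$; its identity is the identity map of $M$. *)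

(* Maps are written on the right; partial maps M -> M are
   represented by their graphs (relations a b : "a is sent to b"). *)
From Stdlib Require Import List.
Import ListNotations.

(* The alphabet \hat X = X ∪ \overline X : inl x = x, inr x = \overline x. *)
Definition hatX (X : Type) : Type := (X + X)%type.

Fixpoint tau {M X : Type} (mul : M -> M -> M) (one : M) (g : X -> M)
  (w : list X) : M :=
  match w with
  | [] => one
  | x :: w' => mul (g x) (tau mul one g w')
  end.

Definition loop_edge {M X : Type} (mul : M -> M -> M) (g : X -> M)
  (s : M) (l : hatX X) (t : M) : Prop :=
  exists (a : M) (x : X),
    (s = a /\ l = inl x /\ t = mul a (g x)) \/
    (s = mul a (g x) /\ l = inr x /\ t = a).

Fixpoint loop_path {M X : Type} (mul : M -> M -> M) (g : X -> M)
  (w : list (hatX X)) (s t : M) : Prop :=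
  match w with
  | [] => s = t
  | l :: w' => exists c, loop_edge mul g s l c /\ loop_path mul g w' c t
  end.

Definition loop_problem {M X : Type} (mul : M -> M -> M) (one : M)
  (g : X -> M) (w : list (hatX X)) : Prop :=
  loop_path mul g w one one.

(* rho_m : a |-> a m, and its partial inverse rho_m^{-1} : M m -> M, a m |-> a. *)
Definition rho {M : Type} (mul : M -> M -> M) (m : M) (a b : M) : Prop :=
  b = mul a m.
Definition rho_inv {M : Type} (mul : M -> M -> M) (m : M) (a b : M) : Prop :=
  a = mul b m.

(* Composition of partial maps written on the right: (f g) = first f, then g. *)
Definition pcomp {M : Type} (f h : M -> M -> Prop) (a b : M) : Prop :=
  exists c, f a c /\ h c b.
Definition pid {M : Type} (a b : M) : Prop := a = b.

Definition phi_letter {M X : Type} (mul : M -> M -> M) (g : X -> M)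
  (l : hatX X) : M -> M -> Prop :=
  match l with
  | inl x => rho mul (g x)
  | inr x => rho_inv mul (g x)
  end.

Fixpoint phi {M X : Type} (mul : M -> M -> M) (g : X -> M)
  (w : list (hatX X)) : M -> M -> Prop :=
  match w with
  | [] => pid
  | l :: w' => pcomp (phi_letter mul g l) (phi mul g w')
  end.

From Stdlib Require Import List.

(* Reading a word along the loop automaton is the same as applying its image
   under phi, so [w] is in the loop problem iff [w phi] fixes the identity.
   Each [w phi] commutes with left multiplications (associativity) and is a
   partial function (right cancellativity); hence if it sends 1 to 1, it sends
   every [a = a 1] to [a] and to nothing else, i.e. it is the identity of H. *)

Section InverseHull.

Variables (M X : Type) (mul : M -> M -> M) (g : X -> M).

Lemma loop_edge_phi_letter (l : hatX X) (s t : M) :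
  loop_edge mul g s l t <-> phi_letter mul g l s t.
Proof.
  split.
  - intros [a [x [[-> [-> ->]] | [-> [-> ->]]]]]; reflexivity.
  - destruct l as [x|x]; simpl; unfold rho, rho_inv; intros Hst.
    + exists s, x; left; auto.
    + exists t, x; right; auto.
Qed.

Lemma loop_path_phi (w : list (hatX X)) (s t : M) :
  loop_path mul g w s t <-> phi mul g w s t.
Proof.
  revert s; induction w as [|l w IH]; simpl; intros s.
  - reflexivity.
  - unfold pcomp; split; intros [c [Hl Hw]]; exists c;
      split; try apply loop_edge_phi_letter; try apply IH; assumption.
Qed.

Section LeftMultiplication.

Hypothesis mulA : forall a b c, mul a (mul b c) = mul (mul a b) c.

Lemma phi_letter_mull (l : hatX X) (s t c : M) :
  phi_letter mul g l s t -> phi_letter mul g l (mul c s) (mul c t).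
Proof.
  destruct l as [x|x]; simpl; unfold rho, rho_inv; intros ->; apply mulA.
Qed.

Lemma phi_mull (w : list (hatX X)) (s t c : M) :
  phi mul g w s t -> phi mul g w (mul c s) (mul c t).
Proof.
  revert s; induction w as [|l w IH]; simpl; intros s.
  - intros ->; reflexivity.
  - intros [d [Hl Hw]]; exists (mul c d).
    split; [apply phi_letter_mull | apply IH]; assumption.
Qed.

End LeftMultiplication.

Section Functionality.

Hypothesis rcancel : forall a b c, mul a c = mul b c -> a = b.

Lemma phi_letter_functional (l : hatX X) (s t t' : M) :
  phi_letter mul g l s t -> phi_letter mul g l s t' -> t = t'.
Proof.
  destruct l as [x|x]; simpl; unfold rho, rho_inv; intros -> Ht'.
  - symmetry; exact Ht'.
  - apply (rcancel _ _ (g x)); rewrite <- Ht'; reflexivity.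
Qed.

Lemma phi_functional (w : list (hatX X)) (s t t' : M) :
  phi mul g w s t -> phi mul g w s t' -> t = t'.
Proof.
  revert s; induction w as [|l w IH]; simpl; intros s.
  - unfold pid; intros -> ->; reflexivity.
  - intros [d [Hl Hw]] [d' [Hl' Hw']].
    rewrite <- (phi_letter_functional l s d d' Hl Hl') in Hw'.
    exact (IH d Hw Hw').
Qed.

End Functionality.

Lemma phi_eq_pid_of_fixed_one (one : M)
  (mulA : forall a b c, mul a (mul b c) = mul (mul a b) c)
  (mulm1 : forall a, mul a one = a)
  (rcancel : forall a b c, mul a c = mul b c -> a = b)
  (w : list (hatX X)) :
  phi mul g w one one -> forall a b : M, phi mul g w a b <-> pid a b.
Proof.
  intros Hone a b.
  assert (Ha : phi mul g w a a).
  { rewrite <- (mulm1 a) at 1 2; exact (phi_mull mulA w one one a Hone). }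
  unfold pid; split.
  - intros Hb; exact (phi_functional rcancel w a a b Ha Hb).
  - intros <-; exact Ha.
Qed.

End InverseHull.

Theorem corollary7p7 (M X : Type) (mul : M -> M -> M) (one : M)
  (mulA : forall a b c, mul a (mul b c) = mul (mul a b) c)
  (mul1m : forall a, mul one a = a)
  (mulm1 : forall a, mul a one = a)
  (rcancel : forall a b c, mul a c = mul b c -> a = b)
  (g : X -> M)
  (tau_surj : forall m : M, exists w : list X, tau mul one g w = m) :
  forall w : list (hatX X),
    loop_problem mul one g w <->
    (forall a b : M, phi mul g w a b <-> pid a b).
Proof.
  intros w; unfold loop_problem; rewrite loop_path_phi.
  split.
  - exact (phi_eq_pid_of_fixed_one M X mul g one mulA mulm1 rcancel w).
  - intros Hid; apply Hid; reflexivity.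
Qed.
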